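(* For every fixed positive integer $q$ there is a constant $C_q$ such that for every $k\ge q$ there exists a set of uniqueness for $(\mathcal{B}^k_q)_+$ with at most $C_q\,k^{\lfloor q/2\rfloor}$ elements; that is, there exist sets of uniqueness for $(\mathcal{B}^k_q)_+$ of size $O(k^{\lfloor q/2\rfloor})$.
   Context: Let $\mathcal{X}=\{-1,+1\}^k$. For $L\subseteq\{1,\ldots,k\}$ let $w_L(x)=\prod_{j\in L}x_j$ (with $w_\emptyset\equiv 1$). For $1\le q\le k$, $\mathcal{B}^k_q$ is the linear span of $\{w_L: |L|\le q\}$ in the space of real functions on $\mathcal{X}$, and $(\mathcal{B}^k_q)_+=\{\varphi\in\mathcal{B}^k_q:\ \varphi\ge 0\}$. A set $U\subseteq\mathcal{X}$ is a set of uniqueness for $(\mathcal{B}^k_q)_+$ if the only $\varphi\in(\mathcal{B}^k_q)_+$ vanishing on $U$ is $\varphi\equiv0$. *)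

From Stdlib Require Import Reals.
From mathcomp Require Import all_boot all_order all_algebra.
From mathcomp Require Import Rstruct.
Set Implicit Arguments. Unset Strict Implicit. Unset Printing Implicit Defensive.
Import Order.TTheory GRing.Theory Num.Theory.
Local Open Scope ring_scope.

(* The cube {-1,+1}^k is encoded as {ffun 'I_k -> bool}; coordinate j of
   x is x_j = +1 if x j = true and -1 if x j = false. Real numbers are
   Stdlib's R (a realType via Rstruct). *)
Definition cube (k : nat) := {ffun 'I_k -> bool}.

Definition coord (k : nat) (x : cube k) (j : 'I_k) : R :=
  if x j then 1 else -1.

Definition walsh (k : nat) (L : {set 'I_k}) (x : cube k) : R :=
  \prod_(j in L) coord x j.

Definition in_B (k q : nat) (phi : cube k -> R) : Prop :=
  exists c : {set 'I_k} -> R,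
    forall x, phi x = \sum_(L : {set 'I_k} | (#|L| <= q)%N) c L * walsh L x.

Definition uniqueness_set (k q : nat) (U : {set cube k}) : Prop :=
  forall phi : cube k -> R,
    in_B q phi -> (forall x, 0 <= phi x) ->
    (forall x, x \in U -> phi x = 0) -> forall x, phi x = 0.

From Pilot Require Import Defs.
From Stdlib Require Import Reals.
From mathcomp Require Import all_boot all_order all_algebra.
From mathcomp Require Import Rstruct.
From mathcomp Require Import zify finfield.
Set Implicit Arguments. Unset Strict Implicit. Unset Printing Implicit Defensive.
Import Order.TTheory GRing.Theory Num.Theory.
Local Open Scope ring_scope.

(* If a family of points is an orthogonal array of strength q, i.e. every
   Walsh function w_L with 0 < |L| <= q sums to zero along it, then the mean of
   any phi in B^k_q along the family is its constant Walsh coefficient, which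
   is also its mean over the whole cube. Hence a nonnegative phi vanishing on
   the family has mean zero on the cube and vanishes identically.

   Such arrays of size 2 (2k)^e, e = q/2, come from the dual of a binary BCH
   code: with distinct nonzero a_j in GF(2^m), k < 2^m <= 2k, and a nontrivial
   additive map lam : GF(2^m) -> F_2, take the points
   x_j = s + lam (sum_(l < e) c_l a_j^(2l+1)) for s in F_2, c in GF(2^m)^e.
   The sum over s kills odd |L|. For even 0 < |L| <= 2e some odd power sum
   sum_(j in L) a_j^(2l+1) is nonzero, because in characteristic 2 the even
   power sums are squares of smaller ones and the first |L| power sums of
   distinct nonzero elements cannot all vanish; the sum over c is then a sum
   of a nontrivial character, which is zero. *)

Lemma sum_eq0_of_reindex_opp (K : numDomainType) (T : finType) (g : T -> T)
    (f : T -> K) :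
  injective g -> (forall x, f (g x) = - f x) -> \sum_x f x = 0.
Proof.
move=> g_inj fg; apply/eqP; rewrite -eqNr; apply/eqP.
rewrite -sumrN [RHS](reindex_inj g_inj) /=.
by apply: eq_bigr => x _; rewrite fg.
Qed.

Lemma power_sums_not_all_eq0 (F : fieldType) (I : finType) (L : {set I})
    (al : I -> F) :
  {in L &, injective al} -> {in L, forall j, al j != 0} -> L != set0 ->
  ~ (forall n, (0 < n <= #|L|)%N -> \sum_(j in L) al j ^+ n = 0).
Proof.
move=> al_inj al_neq0 /set0Pn [j0 Lj0] psum0.
pose P := \prod_(j in L :\ j0) ('X - (al j)%:P).
pose Q := 'X * P.
have sizeP : size P = #|L :\ j0|.+1.
  rewrite /P -big_enum /= -(big_map al xpredT (fun x => 'X - x%:P)).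
  by rewrite size_prod_XsubC size_map -cardE.
have sizeQ : (size Q <= #|L|.+1)%N.
  rewrite /Q mulrC (cardsD1 j0 L) Lj0; apply: (leq_trans (size_polyMleq _ _)).
  by rewrite sizeP size_polyX addn2.
(* Q has no constant term and degree at most |L|, so the power sums kill it. *)
have sumQ0 : \sum_(j in L) Q.[al j] = 0.
  rewrite (eq_bigr (fun j => \sum_(n < #|L|.+1) Q`_n * al j ^+ n)); last first.
    by move=> j _; rewrite (horner_coef_wide _ sizeQ).
  rewrite exchange_big /= big1 // => -[[|n] /= n_lt] _; rewrite -mulr_sumr.
    by rewrite /Q coefXM eqxx mul0r.
  by rewrite psum0 ?mulr0.
have sumQ : \sum_(j in L) Q.[al j] = Q.[al j0].
  rewrite (bigD1 j0) //= big1 ?addr0 // => j /andP [Lj nj].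
  rewrite /Q hornerM /P horner_prod (bigD1 j) /=; last by rewrite !inE nj Lj.
  by rewrite hornerXsubC subrr mul0r mulr0.
move: sumQ0; rewrite sumQ /Q hornerM hornerX /P horner_prod; apply/eqP.
rewrite mulf_neq0 ?al_neq0 //; apply/prodf_neq0 => j.
rewrite !inE => /andP [nj Lj].
by rewrite hornerXsubC subr_eq0; apply: contra nj => /eqP/al_inj ->.
Qed.

Lemma power_sums_eq0_char2 (F : fieldType) (I : finType) (L : {set I})
    (al : I -> F) N :
  2 \in [pchar F] ->
  (forall n, odd n -> (n <= N)%N -> \sum_(j in L) al j ^+ n = 0) ->
  forall n, (0 < n <= N)%N -> \sum_(j in L) al j ^+ n = 0.
Proof.
move=> charF odd_psum0 n.
elim: n {-2}n (leqnn n) => [|M IH] n le_nM /andP [n0 nN].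
  by move: n0; rewrite lt0n -leqn0 le_nM.
case odd_n: (odd n); first exact: odd_psum0.
have n_double : n = (n./2).*2 by rewrite -[LHS]odd_double_half odd_n.
have sqrD (x y : F) : (x + y) ^+ 2 = x ^+ 2 + y ^+ 2.
  by rewrite sqrrD -mulr_natr (pcharf0 charF) mulr0 addr0.
rewrite n_double -muln2 (eq_bigr (fun j => (al j ^+ n./2) ^+ 2)); last first.
  by move=> j _; rewrite exprM.
rewrite -(big_morph (fun x => x ^+ 2) sqrD (expr0n _ _)) IH ?expr0n //;
  move: n0 nN le_nM; rewrite n_double -addnn; lia.
Qed.

Lemma odd_power_sum_neq0 (F : fieldType) (I : finType) (L : {set I})
    (al : I -> F) e :
  2 \in [pchar F] -> {in L &, injective al} -> {in L, forall j, al j != 0} ->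
  L != set0 -> (#|L| <= e.*2)%N ->
  exists l : 'I_e, \sum_(j in L) al j ^+ (2 * l).+1 != 0.
Proof.
move=> charF al_inj al_neq0 L0 Le.
apply/existsP; apply: contraT; rewrite negb_exists => /forallP odd_psum0.
exfalso; apply: (power_sums_not_all_eq0 al_inj al_neq0 L0) => n /andP [n0 nL].
apply: (power_sums_eq0_char2 (N := e.*2)) => //;
  last by rewrite n0 (leq_trans nL).
move=> {n0 nL} {}n odd_n n_le.
have n_half : n = (2 * n./2).+1.
  by rewrite -[LHS]odd_double_half odd_n -muln2 mulnC.
have half_lt : (n./2 < e)%N by move: n_le; rewrite n_half -muln2; lia.
by rewrite [in LHS]n_half; have /negPn/eqP := odd_psum0 (Ordinal half_lt).
Qed.

Lemma sum_sign_linear_form_eq0 (K : numDomainType) (F : finFieldType)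
    (I : finType) (lam : F -> bool) (x0 : F) (S : I -> F) (l0 : I) :
  {morph lam : x y / x + y >-> x (+) y} -> lam x0 -> S l0 != 0 ->
  \sum_(a : {ffun I -> F}) (-1) ^+ lam (\sum_l a l * S l) = 0 :> K.
Proof.
move=> lamD lam_x0 Sl0.
pose shift (a : {ffun I -> F}) :=
  [ffun l => if l == l0 then a l + x0 / S l0 else a l].
apply: (@sum_eq0_of_reindex_opp _ _ shift) => [a b /ffunP eq_ab|a].
  apply/ffunP => l; have := eq_ab l; rewrite !ffunE.
  by case: (l == l0) => // /addIr.
have -> : \sum_l shift a l * S l = \sum_l a l * S l + x0.
  rewrite (bigD1 l0) //= [in RHS](bigD1 l0) //= ffunE eqxx mulrDl divfK //.
  rewrite addrAC; congr (_ + _ + _).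
  by apply: eq_bigr => l /negbTE nl; rewrite ffunE nl.
by rewrite lamD lam_x0 addbT signrN.
Qed.

Lemma exists_nontrivial_additive_bool (F : finFieldType) :
  2 \in [pchar F] ->
  exists2 lam : F -> bool,
    {morph lam : x y / x + y >-> x (+) y} & exists x0, lam x0.
Proof.
move=> charF; pose V := pPrimeCharType charF.
pose crd i (x : V) := vector.coord (vbasis (fullv : {vspace V})) i x.
have [i crd1] : exists i, crd i 1 != 0.
  apply/existsP; apply: contraT; rewrite negb_exists => /forallP crd0.
  have := coord_vbasis (memvf (1 : V)); rewrite big1 => [/eqP|i _].
    by rewrite oner_eq0.
  by have /negPn/eqP := crd0 i; rewrite /crd => ->; rewrite scale0r.
exists (fun x => crd i x != 0); last by exists 1.
have crdD (u v : V) : crd i (u + v) = crd i u + crd i v by rewrite /crd linearD.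
move=> x y /=; rewrite crdD.
move: (crd i x) (crd i y) => a b.
by case: a => [[|[|a]] ?] //; case: b => [[|[|b]] ?].
Qed.

Lemma coord_sign k (x : cube k) j : Defs.coord x j = (-1) ^+ ~~ x j.
Proof. by rewrite /Defs.coord; case: (x j). Qed.

Lemma sum_walsh_eq0 k (L : {set 'I_k}) :
  L != set0 -> \sum_(x : cube k) walsh L x = 0.
Proof.
case/set0Pn => j0 Lj0.
pose flip (x : cube k) : cube k := [ffun j => (j == j0) (+) x j].
apply: (@sum_eq0_of_reindex_opp _ _ flip) => [x y /ffunP eq_xy|x].
  by apply/ffunP => j; have := eq_xy j; rewrite !ffunE => /addbI.
rewrite /walsh (bigD1 j0) //= [in RHS](bigD1 j0) //= -mulNr; congr (_ * _).
  by rewrite !coord_sign ffunE eqxx addTb signrN.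
by apply: eq_bigr => j /andP [_ /negbTE nj]; rewrite !coord_sign ffunE nj.
Qed.

Definition walsh_balanced k q (A : finType) (u : A -> cube k) : Prop :=
  forall L : {set 'I_k}, (0 < #|L| <= q)%N -> \sum_a walsh L (u a) = 0.

Lemma sum_balanced_expansion k q (A : finType) (u : A -> cube k)
    (phi : cube k -> R) (c : {set 'I_k} -> R) :
  (forall x, phi x = \sum_(L : {set 'I_k} | (#|L| <= q)%N) c L * walsh L x) ->
  walsh_balanced q u -> \sum_a phi (u a) = c set0 * #|A|%:R.
Proof.
move=> phiE u_bal.
rewrite (eq_bigr _ (fun a _ => phiE (u a))) exchange_big /=.
rewrite (bigD1 set0) ?cards0 //= [X in _ + X]big1 ?addr0 => [|L /andP [Lq L0]].
  rewrite -mulr_sumr /walsh (eq_bigr (fun _ => 1)) ?sumr_const ?card_ord //.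
  by move=> a _; rewrite big_set0.
by rewrite -mulr_sumr u_bal ?mulr0 // Lq andbT card_gt0.
Qed.

Lemma walsh_balanced_cube k q : walsh_balanced q (fun x : cube k => x).
Proof. by move=> L /andP [L0 _]; apply: sum_walsh_eq0; rewrite -card_gt0. Qed.

Lemma balanced_uniqueness_set k q (A : finType) (u : A -> cube k) (a0 : A) :
  walsh_balanced q u -> uniqueness_set q [set u a | a in A].
Proof.
move=> u_bal phi [c phiE] phi_ge0 phi_u.
have c0 : c set0 = 0.
  have := sum_balanced_expansion phiE u_bal.
  rewrite big1 => [/esym/eqP|a _]; last by apply/phi_u/imset_f.
  have A0 : (0 < #|A|)%N by apply/card_gt0P; exists a0.
  by rewrite mulf_eq0 pnatr_eq0 eqn0Ngt A0 orbF => /eqP.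
have : \sum_(x : cube k) phi x = 0.
  by rewrite (sum_balanced_expansion phiE (@walsh_balanced_cube k q)) c0 mul0r.
by move/psumr_eq0P => phi0 x; apply: phi0.
Qed.

Section DualBCHCode.

Variables (F : finFieldType) (lam : F -> bool) (k e : nat) (al : 'I_k -> F).
Hypothesis lamD : {morph lam : x y / x + y >-> x (+) y}.

(* The negation compensates for [coord] sending [true] to +1. *)
Definition code_point (p : bool * {ffun 'I_e -> F}) : cube k :=
  [ffun j => ~~ (p.1 (+) lam (\sum_(l < e) p.2 l * al j ^+ (2 * l).+1))].

Lemma walsh_code_point (L : {set 'I_k}) p :
  walsh L (code_point p) = ((-1) ^+ p.1) ^+ #|L| *
    (-1) ^+ lam (\sum_(l < e) p.2 l * \sum_(j in L) al j ^+ (2 * l).+1).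
Proof.
have sign0 : (-1) ^+ lam 0 = 1 :> R.
  by have := lamD 0 0; rewrite addr0; case: (lam 0).
have signD x y : (-1) ^+ lam (x + y) = (-1) ^+ lam x * (-1) ^+ lam y :> R.
  by rewrite lamD signr_addb.
rewrite /walsh (eq_bigr (fun j => (-1) ^+ p.1 *
    (-1) ^+ lam (\sum_(l < e) p.2 l * al j ^+ (2 * l).+1))); last first.
  by move=> j _; rewrite coord_sign ffunE negbK signr_addb.
rewrite big_split /= prodr_const -(big_morph _ signD sign0).
by rewrite exchange_big /=; under [in RHS]eq_bigr do rewrite mulr_sumr.
Qed.

Hypothesis charF : 2 \in [pchar F].
Variable x0 : F.
Hypothesis lam_x0 : lam x0.
Hypothesis al_inj : injective al.
Hypothesis al_neq0 : forall j, al j != 0.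

Lemma code_point_balanced q : (q <= e.*2.+1)%N -> walsh_balanced q code_point.
Proof.
move=> qe L /andP [L0 Lq].
under eq_bigr do rewrite walsh_code_point.
rewrite -(pair_big xpredT xpredT (fun (s : bool) (a : {ffun 'I_e -> F}) =>
  ((-1) ^+ s) ^+ #|L| *
  (-1) ^+ lam (\sum_(l < e) a l * \sum_(j in L) al j ^+ (2 * l).+1))) /=.
rewrite big_bool /= -!mulr_sumr -mulrDl expr1n.
case odd_L: (odd #|L|); first by rewrite expr1 -signr_odd odd_L addNr mul0r.
have Le : (#|L| <= e.*2)%N.
  rewrite -ltnS ltn_neqAle (leq_trans Lq qe) andbT.
  by apply: (contraFneq _ odd_L) => ->; rewrite /= odd_double.
have L_neq0 : L != set0 by rewrite -card_gt0.
have [l0 Sl0] :=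
  odd_power_sum_neq0 charF (in2W al_inj) (fun j _ => al_neq0 j) L_neq0 Le.
by rewrite (sum_sign_linear_form_eq0 _ lamD lam_x0 Sl0) mulr0.
Qed.

End DualBCHCode.

Lemma exists_char2_field_card k :
  (0 < k)%N -> exists F : finFieldType, 2 \in [pchar F] /\ (k < #|F| <= k.*2)%N.
Proof.
move=> k0.
have [F charF cardF] := @pPrimePowerField 2 (trunc_log 2 k).+1 isT isT.
exists F; split => //; rewrite cardF trunc_log_ltn //=.
by rewrite expnS mul2n leq_double trunc_logP.
Qed.

Lemma exists_injective_in (T : finType) (A : {pred T}) k :
  (k <= #|A|)%N -> exists2 f : 'I_k -> T, injective f & forall j, f j \in A.
Proof.
move=> kA; exists (fun j => enum_val (widen_ord kA j)) => [i j|j].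
  by move/enum_val_inj/(congr1 val) => /= /val_inj.
exact: enum_valP.
Qed.

Theorem theorem3 :
  forall q : nat, (0 < q)%N ->
  exists C : nat, forall k : nat, (q <= k)%N ->
    exists U : {set cube k},
      (#|U| <= C * k ^ (q./2))%N /\ uniqueness_set q U.
Proof.
move=> q q0; exists (2 ^ (q./2).+1)%N => k qk.
have [F [charF /andP [kF Fk]]] := exists_char2_field_card (leq_trans q0 qk).
have [lam lamD [x0 lam_x0]] := exists_nontrivial_additive_bool charF.
have [al al_inj al_neq0] :
    exists2 al : 'I_k -> F, injective al & forall j, al j != 0.
  apply: (@exists_injective_in _ (predC1 0)).
  by rewrite cardC1 -ltnS (ltn_predK kF).
have q_le : (q <= (q./2).*2.+1)%N.
  by rewrite -{1}(odd_double_half q) addnC -addn1 leq_add2l leq_b1.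
have code_bal := code_point_balanced lamD charF lam_x0 al_inj al_neq0 q_le.
have U_uniq := balanced_uniqueness_set (true, [ffun=> 0]) code_bal.
eexists; split; last exact: U_uniq.
apply: leq_trans (leq_imset_card _ _) _.
rewrite card_prod card_bool card_ffun card_ord expnS -mulnA leq_mul2l /=.
rewrite -expnMn mul2n; case: (q./2) => [|e]; first by rewrite !expn0.
by rewrite leq_exp2r.
Qed.
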